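(* Let $x,y$ be vertices of the Farey graph with $d_{\mathcal{C}}(x,y)\ge 2$, let $\mathcal{L}=\mathcal{L}(x,y)$ have type $(a_1,\dots,a_n)$ and pivot points $v_0=x,v_1,\dots,v_n,v_{n+1}=y$. Define the efficient path as follows: start at $v_0$; when at $v_i$ with $i\le n-1$, perform the move $p$ (to $v_{i+2}$) if $a_{i+1}=1$ and the move $t$ (to $v_{i+1}$) if $a_{i+1}\ge 2$; when at $v_n$, perform the move $t$; stop upon reaching $v_{n+1}$. Then the efficient path is a geodesic from $x$ to $y$ in $\mathcal{L}$ (equivalently, in $\mathcal{F}$).
   Context: The Farey graph $\mathcal{F}$ has vertex set $\mathbb{Q}\cup\{\infty\}$ (vertices $p/q$ in lowest terms, $\infty=1/0$), $p/q$ and $r/s$ adjacent iff $|ps-qr|=1$, with path metric $d_{\mathcal{C}}$ (unit edge lengths). It is embedded in $\overline{\mathbb{H}}=\mathbb{H}^2\cup\partial\mathbb{H}^2$ with edges realized as hyperbolic geodesics; closures of complementary regions are ideal triangles (Farey triangles). For vertices $x,y$ the ladder $\mathcal{L}(x,y)$ is the union of the Farey triangles whose interior meets the oriented hyperbolic geodesic $\gamma$ from $x$ to $y$, regarded as the subgraph formed by their vertices and edges. These triangles $T_1,\dots,T_N$ are crossed by $\gamma$ in order; $\gamma$ passes through exactly two sides of each $T_j$ (or, for $T_1$ and $T_N$, has an endpoint at a vertex and crosses the opposite side), and the pivot of $T_j$ is the vertex of $T_j$ common to the two sides of $T_j$ that are rungs (edges whose interior meets $\gamma$) — for $1<j<N$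 — while for $T_1$ and $T_N$ it is the vertex of the single rung side lying on the appropriate side so that maximal runs are well defined; equivalently, the type is defined as follows. Group $T_1,\dots,T_N$ into maximal runs of consecutive triangles all containing a common vertex $v$ not equal to $x$ or $y$ and with all of them incident to $v$ along rungs; if there are $n$ runs with lengths $a_1,\dots,a_n$ (in order along $\gamma$) and common vertices $v_1,\dots,v_n$, then $\mathcal{L}$ has type $(a_1,\dots,a_n)$ and pivot points $v_0=x,v_1,\dots,v_n,v_{n+1}=y$. Consecutive pivot points $v_i,v_{i+1}$ are adjacent, the pivots alternate between the two sides of $\gamma$, and the vertices of the $i$-th run other than $v_i$ form a path of exactly $a_i$ edges in $\mathcal{L}$ from $v_{i-1}$ to $v_{i+1}$. The move $t$ from $v_i$ is the one-edge step $v_i\to v_{i+1}$; the move $p$ from $v_i$ is the traversal $v_i\to v_{i+2}$ along this path of $a_{i+1}$ edges. The length of a path is its number of edges. *)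

From Stdlib Require Import ZArith List.
Import ListNotations.
Open Scope Z_scope.

(** Vertices p/q of the Farey graph are encoded by pairs (p,q) of integers in
    lowest terms with q > 0, and infinity = 1/0 is encoded as (1,0). *)
Definition V : Type := (Z * Z)%type.

Definition farey_vertex (v : V) : Prop :=
  Z.gcd (fst v) (snd v) = 1 /\ (0 < snd v \/ (snd v = 0 /\ fst v = 1)).

Definition infty : V := (1, 0).

Definition fdet (u w : V) : Z := fst u * snd w - snd u * fst w.

Definition farey_adj (u w : V) : Prop := Z.abs (fdet u w) = 1.

(** A path in the Farey graph from x to y, given as its list of vertices
    (consecutive vertices adjacent).  Its length (number of edges) is
    [length p - 1]. *)
Fixpoint adj_chain (p : list V) : Prop :=
  match p with
  | u :: ((w :: _) as p') => farey_adj u w /\ adj_chain p'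
  | _ => True
  end.

Definition farey_path (x y : V) (p : list V) : Prop :=
  p <> [] /\ hd x p = x /\ last p x = y /\
  Forall farey_vertex p /\ adj_chain p.

Definition path_length (p : list V) : nat := (length p - 1)%nat.

Definition farey_dist_le (x y : V) (n : nat) : Prop :=
  exists p, farey_path x y p /\ (path_length p <= n)%nat.

Definition farey_geodesic (x y : V) (p : list V) : Prop :=
  farey_path x y p /\
  forall q, farey_path x y q -> (path_length p <= path_length q)%nat.

(** The hyperbolic geodesic with endpoints a,b crosses (meets in its
    interior) the hyperbolic geodesic with endpoints x,y iff the pairs {a,b}
    and {x,y} are (distinct and) interleaved on the circle at infinity
    R ∪ {∞}, iff the cross ratio [x,y;a,b] is negative.  In homogeneous
    coordinates this is the sign condition below (invariant under rescaling
    each of the four vectors, and valid uniformly including ∞ = (1,0)). *)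
Definition separates (x y a b : V) : Prop :=
  fdet x a * fdet y b * fdet x b * fdet y a < 0.

(** An (unordered) edge {a,b}, stored as a pair. *)
Definition endpoint (z : V) (e : V * V) : Prop := z = fst e \/ z = snd e.

Definition same_edge (e f : V * V) : Prop := e = f \/ e = (snd f, fst f).

Definition rung (x y : V) (e : V * V) : Prop :=
  farey_vertex (fst e) /\ farey_vertex (snd e) /\
  farey_adj (fst e) (snd e) /\ separates x y (fst e) (snd e).

Definition e0 : V * V := (infty, infty).
Definition v0 : V := infty.

(** [E] is the list of all rungs of the ladder L(x,y), each listed once,
    in the order in which the oriented geodesic from x to y crosses them:
    E_i comes before E_j iff E_i separates x from the endpoints of E_j not on E_i. *)
Definition ladder_rungs (x y : V) (E : list (V * V)) : Prop :=
  E <> [] /\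
  (forall e, In e E -> rung x y e) /\
  (forall e, rung x y e -> exists f, In f E /\ same_edge e f) /\
  (forall i j, (i < j < length E)%nat ->
     ~ same_edge (nth i E e0) (nth j E e0) /\
     forall z, endpoint z (nth j E e0) -> ~ endpoint z (nth i E e0) ->
       separates x z (fst (nth i E e0)) (snd (nth i E e0))).

(** Ladder triangles: with E = [E_1; ...; E_M] (M = N-1), the triangles are
    T_1 = {x} ∪ E_1, T_{j+1} = E_j ∪ E_{j+1}, T_N = E_M ∪ {y}.
    [w] = [w_1; ...; w_N] lists the pivots of T_1, ..., T_N: for 1<j<N the
    vertex common to the two rungs E_{j-1}, E_j of T_j; for T_1 and T_N the
    pivot is that of the neighbouring triangle (w_1 = w_2, w_N = w_{N-1}), a
    vertex of the single rung (when N = 2 either endpoint of E_1). *)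
Definition ladder_pivots (E : list (V * V)) (w : list V) : Prop :=
  length w = S (length E) /\
  (forall k, (1 <= k)%nat -> (k + 1 < length w)%nat ->
     endpoint (nth k w v0) (nth (k - 1) E e0) /\ endpoint (nth k w v0) (nth k E e0)) /\
  nth 0 w v0 = nth 1 w v0 /\
  endpoint (nth 0 w v0) (nth 0 E e0) /\
  nth (length w - 1) w v0 = nth (length w - 2) w v0.

(** [w] splits into maximal runs of equal consecutive pivots, of lengths
    a = [a_1; ...; a_n] with common vertices v = [v_1; ...; v_n]. *)
Fixpoint consec_distinct (v : list V) : Prop :=
  match v with
  | u :: ((u' :: _) as v') => u <> u' /\ consec_distinct v'
  | _ => True
  end.

Definition runs_of (w : list V) (a : list nat) (v : list V) : Prop :=
  length a = length v /\
  Forall (fun k => (1 <= k)%nat) a /\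
  consec_distinct v /\
  w = concat (map (fun kv => repeat (snd kv) (fst kv)) (combine a v)).

Definition ladder_type (x y : V) (a : list nat) (v : list V) : Prop :=
  exists E w, ladder_rungs x y E /\ ladder_pivots E w /\ runs_of w a v.

(** [eff_go as vs]: the walker sits at pivot v_i, [as = [a_{i+1}; ...; a_n]]
    and [vs = [v_{i+1}; ...; v_{n+1}]]; it returns the pivots visited after
    v_i.
    Since p is only used when a_{i+1} = 1, each move is one edge. *)
Fixpoint eff_go (vs : list V) (as_ : list nat) {struct vs} : list V :=
  match as_, vs with
  | [], _ => vs
  | a :: as', v1 :: vs' =>
      if Nat.eqb a 1 then
        match vs' with
        | v2 :: vs'' => v2 :: eff_go vs'' (tl as')
        | [] => []
        end
      else v1 :: eff_go vs' as'
  | _ :: _, [] => []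
  end.

Definition efficient_path (x y : V) (a : list nat) (v : list V) : list V :=
  x :: eff_go (v ++ [y]) a.

From Stdlib Require Import ZArith List Lia.
Import ListNotations.
Open Scope Z_scope.

(* Farey vertices are primitive integer vectors and the hyperbolic picture is
   encoded by signs of determinants.  Any Farey edge (a,b) is a basis of Z^2; writing
   points in that basis ([coord a b]) changes every determinant by the factor
   det(a,b) = +-1, so adjacency and crossing may be checked for the standard edge
   {(1,0),(0,1)}, where they become sign conditions on integer coordinates.  This gives:
   Farey edges never cross, so a path from x to y passes through an endpoint of every
   rung ([path_meets_rung]); the Farey triangle on one side of an edge ([triangle_step]),
   the fan of triangles at a pivot ([jump_step]) and the non-crossing of rungs at a
   common vertex ([rungs_at_vertex_do_not_cross]).

   From these, for the ordered rungs E_0,...,E_(M-1) and pivots W_0,...,W_M: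
   x (resp. y) is adjacent to the endpoints of the first (resp. last) rung, consecutive
   distinct pivots are adjacent, the pivots around a run of length one are adjacent,
   and the rungs through a vertex are consecutive.

   Each run charges one or two "marks": its pivot, and for runs of length >= 2
   also the other endpoint of its first rung.  The efficient path makes one move per
   run-or-pair-of-runs and is a Farey path ([efficient_walk_is_path]); any path from x
   to y meets every rung and so contains distinct marks, one per move of the efficient
   path, besides x and y ([efficient_walk_is_shortest]). *)

Lemma fdet_anti u w : fdet u w = - fdet w u.
Proof. destruct u, w; unfold fdet; simpl; ring. Qed.

Lemma fdet_self u : fdet u u = 0.
Proof. destruct u; unfold fdet; simpl; ring. Qed.

Lemma adj_sym u w : farey_adj u w -> farey_adj w u.
Proof. unfold farey_adj; rewrite fdet_anti, Z.abs_opp; auto. Qed.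

Lemma adj_neq u w : farey_adj u w -> u <> w.
Proof. intros H ->; unfold farey_adj in H; rewrite fdet_self in H; discriminate. Qed.

Lemma sep_swap x y a b : separates x y a b -> separates x y b a.
Proof. unfold separates; intros; nia. Qed.

Lemma sep_swap_ends x y a b : separates x y a b -> separates y x a b.
Proof. unfold separates; intros; nia. Qed.

Lemma sep_fdet_nz x y a b : separates x y a b ->
  fdet x a <> 0 /\ fdet y b <> 0 /\ fdet x b <> 0 /\ fdet y a <> 0.
Proof. unfold separates; intros H; repeat split; intro h; rewrite h in H; lia. Qed.

Lemma sep_self_l x y b : ~ separates x y x b.
Proof. unfold separates; rewrite fdet_self; lia. Qed.

Lemma sep_self_r x y b : ~ separates x y b x.
Proof. unfold separates; rewrite fdet_self; lia. Qed.

Lemma sep_diag x a b : ~ separates x x a b.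
Proof. unfold separates; nia. Qed.

(* Farey vertices are primitive vectors, normalised by the sign of the second entry;
   hence two of them with vanishing determinant coincide. *)
Lemma vertex_gcd (z : V) k : farey_vertex z -> (k | fst z) -> (k | snd z) -> Z.abs k = 1.
Proof.
  intros [Hg _] H1 H2. apply Z.divide_1_r_abs. rewrite <- Hg.
  apply Z.gcd_greatest; auto.
Qed.

Lemma vertex_eq_of_fdet0 u w : farey_vertex u -> farey_vertex w -> fdet u w = 0 -> u = w.
Proof.
  destruct u as [p q], w as [r s]; unfold farey_vertex, fdet; simpl.
  intros [Hg1 H1] [Hg2 H2] H.
  destruct H1 as [H1|[H1 H1']]; destruct H2 as [H2|[H2 H2']]; subst; try nia; auto.
  assert (Hqs : (q | s)).
  { apply (Z.gauss q p s); [exists r; nia | rewrite Z.gcd_comm; auto]. }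
  assert (Hsq : (s | q)).
  { apply (Z.gauss s r q); [exists p; nia | rewrite Z.gcd_comm; auto]. }
  assert (q = s) by (apply Z.divide_antisym_nonneg; auto; lia).
  subst. f_equal. nia.
Qed.

(* Two Farey edges never cross: by the Pluecker relation
   det(p,q) det(a,b) = det(p,a) det(q,b) - det(p,b) det(q,a), and the two products on the
   right would have opposite signs, making the right side at least 2 in absolute value. *)
Lemma farey_edges_do_not_cross p q a b :
  farey_adj p q -> farey_adj a b -> ~ separates p q a b.
Proof.
  unfold farey_adj, separates; intros H1 H2 H.
  assert (Pl : fdet p q * fdet a b = fdet p a * fdet q b - fdet p b * fdet q a)
    by (destruct p, q, a, b; unfold fdet; simpl; ring).
  assert (Z.abs (fdet p a * fdet q b - fdet p b * fdet q a) = 1)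
    by (rewrite <- Pl, Z.abs_mul; lia).
  nia.
Qed.

Definition scale (e : Z) (u : V) : V := (e * fst u, e * snd u).

Lemma scale_to_vertex c a : Z.abs (fdet c a) = 1 ->
  exists e, (e = 1 \/ e = -1) /\ farey_vertex (scale e c).
Proof.
  destruct c as [p q], a as [r s]. unfold fdet, farey_vertex, scale; simpl. intros H.
  assert (Hg : Z.gcd p q = 1).
  { assert (Hd : (Z.gcd p q | p * s - q * r)).
    { apply Z.divide_sub_r; apply Z.divide_mul_l;
      [apply Z.gcd_divide_l | apply Z.gcd_divide_r]. }
    apply Z.divide_abs_r in Hd. rewrite H in Hd.
    apply Z.divide_1_r_nonneg; auto. apply Z.gcd_nonneg. }
  destruct (Z.lt_trichotomy q 0) as [Hq|[Hq|Hq]].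
  - exists (-1). replace (-1 * p) with (-p) by ring. replace (-1 * q) with (-q) by ring.
    rewrite Z.gcd_opp_l, Z.gcd_opp_r. lia.
  - subst q. rewrite Z.gcd_0_r in Hg.
    destruct (Z.abs_spec p) as [[_ Hp]|[_ Hp]]; rewrite Hp in Hg.
    + exists 1. assert (p = 1) by lia. subst p. simpl. lia.
    + exists (-1). assert (p = -1) by lia. subst p. simpl. lia.
  - exists 1. rewrite !Z.mul_1_l. lia.
Qed.

Section EdgeCoordinates.
Variables a b : V.
Hypothesis Hab : farey_adj a b.

(* The coordinates of z in the basis (a,b), as stated by [coord_expand]. *)
Definition coord (z : V) : V := (fdet a b * fdet z b, fdet a b * fdet a z).

Let D := fdet a b.

Lemma det_sq : D * D = 1.
Proof. unfold farey_adj in Hab. fold D in Hab. nia. Qed.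

Lemma coord_expand z : z = (fst (coord z) * fst a + snd (coord z) * fst b,
                            fst (coord z) * snd a + snd (coord z) * snd b).
Proof.
  pose proof det_sq as HD. unfold D, coord, fdet in *.
  destruct a as [a1 a2], b as [b1 b2], z as [z1 z2]; simpl in *.
  f_equal; [rewrite <- (Z.mul_1_l z1) at 1 | rewrite <- (Z.mul_1_l z2) at 1];
  rewrite <- HD; ring.
Qed.

(* The change of basis has determinant det(a,b) = +-1, so adjacency and crossing can be
   read off in coordinates. *)
Lemma fdet_coord z w : fdet z w = D * fdet (coord z) (coord w).
Proof.
  pose proof det_sq as HD.
  transitivity ((D * D) * (D * D) * fdet z w); [rewrite HD; ring |].
  unfold D, coord, fdet; simpl. ring.
Qed.

Lemma adj_coord z w : farey_adj z w <-> farey_adj (coord z) (coord w).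
Proof.
  unfold farey_adj. rewrite fdet_coord, Z.abs_mul.
  assert (Z.abs D = 1) by exact Hab. lia.
Qed.

Lemma sep_coord x y u w :
  separates x y u w <-> separates (coord x) (coord y) (coord u) (coord w).
Proof.
  unfold separates. rewrite !(fdet_coord x), !(fdet_coord y).
  pose proof det_sq as HD.
  set (P := fdet (coord x) (coord u) * fdet (coord y) (coord w) *
            fdet (coord x) (coord w) * fdet (coord y) (coord u)).
  replace (D * fdet (coord x) (coord u) * (D * fdet (coord y) (coord w)) *
           (D * fdet (coord x) (coord w)) * (D * fdet (coord y) (coord u)))
    with ((D * D) * (D * D) * P) by (unfold P; ring).
  rewrite HD. lia.
Qed.

Lemma coord_a : coord a = (1, 0).
Proof. unfold coord. rewrite fdet_self. pose proof det_sq. unfold D in *. f_equal; lia. Qed.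

Lemma coord_b : coord b = (0, 1).
Proof.
  unfold coord. rewrite fdet_self. pose proof det_sq. unfold D in *. f_equal; lia.
Qed.

Lemma coord_scale e z : coord (scale e z) = (e * fst (coord z), e * snd (coord z)).
Proof. unfold coord, scale, fdet; cbn [fst snd]. f_equal; ring. Qed.

Lemma vertex_with_coord k : exists c e, (e = 1 \/ e = -1) /\ farey_vertex c /\ coord c = (e, e * k).
Proof.
  set (c0 := (fst a + k * fst b, snd a + k * snd b)).
  assert (Hc0 : coord c0 = (1, k)).
  { pose proof det_sq as HD. unfold coord, c0, D, fdet in *; simpl.
    f_equal; [transitivity (1 * 1) | transitivity (1 * k)]; try ring;
    rewrite <- HD at 1; ring. }
  assert (Habs : Z.abs (fdet c0 b) = 1).
  { rewrite fdet_coord, Hc0, coord_b, Z.abs_mul.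
    replace (fdet (1, k) (0, 1)) with 1 by (unfold fdet; cbn [fst snd]; ring).
    assert (Z.abs D = 1) by exact Hab. lia. }
  destruct (scale_to_vertex c0 b Habs) as [e [He Hv]].
  exists (scale e c0), e. split; [exact He | split; [exact Hv |]].
  rewrite coord_scale, Hc0. cbn [fst snd]. f_equal. ring.
Qed.

Lemma coord_divides z k : (k | fst (coord z)) -> (k | snd (coord z)) ->
  (k | fst z) /\ (k | snd z).
Proof.
  intros H1 H2. rewrite (coord_expand z); simpl.
  split; apply Z.divide_add_r; apply Z.divide_mul_l; auto.
Qed.

End EdgeCoordinates.

Lemma sgn_sq t : t <> 0 -> Z.sgn t * Z.sgn t = 1 /\ Z.sgn t * t > 0.
Proof.
  intros H. destruct (Z.lt_trichotomy t 0) as [h|[h|h]];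
  [rewrite Z.sgn_neg | lia | rewrite Z.sgn_pos]; lia.
Qed.

Lemma fdet_sq_coord a b z w : farey_adj a b ->
  fdet z w * fdet z w = fdet (coord a b z) (coord a b w) * fdet (coord a b z) (coord a b w).
Proof.
  intros Hab. rewrite (fdet_coord a b Hab z w).
  pose proof (det_sq a b Hab). nia.
Qed.

(* The standard edge a = (1,0), b = (0,1) crossed by zw, with |det(z,a)| < |det(z,b)|
   (i.e. |z2| < |z1|): the third
   vertex c = +-(1,s) of the Farey triangle on z's side (s the sign of z1 z2) lies on z's
   side, the edge ac still crosses zw, and b is on w's side of ac. *)
Lemma branch_at_standard_edge (z1 z2 w1 w2 e s : Z) :
  separates (z1, z2) (w1, w2) (1, 0) (0, 1) -> z2 * z2 < z1 * z1 ->
  e * e = 1 -> s * s = 1 -> s * (z1 * z2) > 0 ->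
  ~ separates (z1, z2) (e, e * s) (1, 0) (0, 1) /\
  separates (z1, z2) (w1, w2) (1, 0) (e, e * s) /\
  ~ separates (w1, w2) (0, 1) (1, 0) (e, e * s).
Proof.
  unfold separates, fdet; cbn [fst snd]. intros Hs Hlt He Hs2 Hsg.
  (* From |z2| < |z1|: z2^2 < |z1 z2|; and w lies on the other side, s w1 w2 < 0. *)
  assert (Hz : z2 * z2 < s * z1 * z2).
  { assert (z2 * z2 * (z2 * z2) < (s * z1 * z2) * (s * z1 * z2)).
    { replace ((s * z1 * z2) * (s * z1 * z2)) with ((s * s) * (z1 * z1) * (z2 * z2)) by ring.
      rewrite Hs2. nia. }
    nia. }
  assert (Hw : s * w1 * w2 < 0) by nia.
  assert (He' : e = 1 \/ e = -1) by nia. assert (Hs' : s = 1 \/ s = -1) by nia.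
  repeat split; destruct He' as [-> | ->], Hs' as [-> | ->]; try intro Hn; nia.
Qed.

(* The same statement for an arbitrary Farey edge, by change of coordinates. *)
Lemma triangle_branch a b z w :
  farey_adj a b -> separates z w a b -> fdet z a * fdet z a < fdet z b * fdet z b ->
  exists c, farey_vertex c /\ farey_adj a c /\ farey_adj c b /\ c <> a /\ c <> b /\
   ~ separates z c a b /\ separates z w a c /\ ~ separates w b a c.
Proof.
  intros Hab Hs Hlt.
  rewrite !(fdet_sq_coord a b z _ Hab), coord_a, coord_b in Hlt by exact Hab.
  rewrite (sep_coord a b Hab), coord_a, coord_b in Hs by exact Hab.
  destruct (coord a b z) as [z1 z2] eqn:Ez, (coord a b w) as [w1 w2] eqn:Ew.
  assert (Hnz : z1 * z2 <> 0).
  { destruct (sep_fdet_nz _ _ _ _ Hs) as [h1 [_ [h2 _]]].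
    unfold fdet in h1, h2; cbn [fst snd] in h1, h2. apply Z.neq_mul_0; lia. }
  destruct (sgn_sq _ Hnz) as [Hs2 Hsg].
  destruct (vertex_with_coord a b Hab (Z.sgn (z1 * z2))) as [c [e [He [Hc Ec]]]].
  exists c.
  rewrite (adj_coord a b Hab a c), (adj_coord a b Hab c b),
    (sep_coord a b Hab z c a b), (sep_coord a b Hab z w a c), (sep_coord a b Hab w b a c),
    coord_a, coord_b, Ez, Ew, Ec by exact Hab.
  unfold fdet in Hlt; cbn [fst snd] in Hlt.
  destruct (branch_at_standard_edge z1 z2 w1 w2 e (Z.sgn (z1 * z2))) as [N1 [S2 N3]]; auto; try nia.
  split; [exact Hc |].
  split; [unfold farey_adj, fdet; cbn [fst snd]; destruct He as [-> | ->]; nia |].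
  split; [unfold farey_adj, fdet; cbn [fst snd]; destruct He as [-> | ->]; lia |].
  split; [intros ->; rewrite coord_a in Ec by exact Hab; injection Ec; nia |].
  split; [intros ->; rewrite coord_b in Ec by exact Hab; injection Ec; nia |].
  auto.
Qed.

(* If z is equidistant from a and b in the coordinates of (a,b), then z = +-(a +- b) is
   the apex of a Farey triangle on ab. *)
Lemma triangle_apex a b z : farey_vertex z -> farey_adj a b ->
  fdet z a * fdet z a = fdet z b * fdet z b -> farey_adj z a /\ farey_adj z b.
Proof.
  intros Hz Hab Heq.
  rewrite !(fdet_sq_coord a b z _ Hab), coord_a, coord_b in Heq by exact Hab.
  rewrite (adj_coord a b Hab z a), (adj_coord a b Hab z b), coord_a, coord_b by exact Hab.
  assert (Hdiv := coord_divides a b Hab z).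
  destruct (coord a b z) as [z1 z2]; unfold farey_adj, fdet in *; cbn [fst snd] in *.
  assert (Hpm : z2 = z1 \/ z2 = - z1) by nia.
  assert (Z.abs z1 = 1).
  { destruct (Hdiv z1) as [d1 d2]; [apply Z.divide_refl | |].
    - destruct Hpm as [-> | ->]; [apply Z.divide_refl | apply Z.divide_opp_r, Z.divide_refl].
    - apply (vertex_gcd z z1 Hz d1 d2). }
  destruct Hpm as [-> | ->]; lia.
Qed.

(* The Farey triangle on z's side of an edge ab crossed by zw: either z is its apex, or
   its third vertex c lies on z's side and one of the other two sides, uc, still crosses
   zw while keeping the remaining vertex v on w's side. *)
Lemma triangle_step a b z w : farey_vertex z -> farey_adj a b -> separates z w a b ->
  (farey_adj z a /\ farey_adj z b) \/
  exists u v c, ((u = a /\ v = b) \/ (u = b /\ v = a)) /\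
    farey_vertex c /\ farey_adj u c /\ c <> a /\ c <> b /\
    ~ separates z c a b /\ separates z w u c /\ ~ separates w v u c.
Proof.
  intros Hz Hab Hs.
  destruct (Z.lt_trichotomy (fdet z a * fdet z a) (fdet z b * fdet z b)) as [h|[h|h]].
  - right. destruct (triangle_branch a b z w Hab Hs h) as [c [Hc [H1 [_ [H3 [H4 [H5 H6]]]]]]].
    exists a, b, c. tauto.
  - left. apply triangle_apex; auto.
  - right. destruct (triangle_branch b a z w (adj_sym _ _ Hab) (sep_swap _ _ _ _ Hs) h)
      as [c [Hc [H1 [_ [H3 [H4 [H5 [H6 H7]]]]]]]].
    exists b, a, c. split; [right; auto |].
    do 4 (split; [auto |]). split; [intro Hn; apply H5, sep_swap, Hn | auto].
Qed.

(* The fan at the standard edge a = (1,0), p = (0,1) towards a further rung ad, with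
   d = (d1,d2), |d2| = 1, |d1| >= 2, all three crossed by xy: with s the sign of d1 d2 and
   m = |d1|, x lies where s x1 x2 < 0, and y satisfies s y1 y2 > y2^2 (in fact > m y2^2). *)
Lemma jump_signs x1 x2 y1 y2 d1 d2 s :
  d2 * d2 = 1 -> s * s = 1 -> s * (d1 * d2) >= 2 ->
  separates (x1, x2) (y1, y2) (1, 0) (0, 1) ->
  separates (x1, x2) (y1, y2) (1, 0) (d1, d2) ->
  separates (x1, x2) (d1, d2) (1, 0) (0, 1) ->
  s * (x1 * x2) < 0 /\ s * (y1 * y2) - y2 * y2 > 0.
Proof.
  unfold separates, fdet; cbn [fst snd]. intros Hd Hs Hm Sxy Sxyd Sxd.
  set (m := s * (d1 * d2)) in *.
  set (X := s * (x1 * x2)). set (Y := s * (y1 * y2)).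
  assert (HX : X < 0).
  { assert (X * m < 0) by (replace (X * m) with (s * s * (x1 * x2 * (d1 * d2))) by
      (unfold X, m; ring); rewrite Hs; nia).
    nia. }
  assert (HY : Y > 0).
  { assert (X * Y < 0) by (replace (X * Y) with (s * s * (x1 * x2 * (y1 * y2))) by
      (unfold X, Y; ring); rewrite Hs; nia).
    nia. }
  (* the crossing of ad by xy, expressed through X and Y *)
  assert (Fx : X - x2 * x2 * m = s * d2 * (x2 * (x1 * d2 - x2 * d1))).
  { transitivity (X * (d2 * d2) - x2 * x2 * m); [rewrite Hd; ring | unfold X, m; ring]. }
  assert (Fy : Y - y2 * y2 * m = s * d2 * (y2 * (y1 * d2 - y2 * d1))).
  { transitivity (Y * (d2 * d2) - y2 * y2 * m); [rewrite Hd; ring | unfold Y, m; ring]. }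
  assert (HXY : (X - x2 * x2 * m) * (Y - y2 * y2 * m) < 0).
  { rewrite Fx, Fy.
    replace (s * d2 * (x2 * (x1 * d2 - x2 * d1)) * (s * d2 * (y2 * (y1 * d2 - y2 * d1))))
      with ((s * s) * (d2 * d2) * ((x1 * 0 - x2 * 1) * (y1 * d2 - y2 * d1) *
                                   (x1 * d2 - x2 * d1) * (y1 * 0 - y2 * 1))) by ring.
    rewrite Hs, Hd. lia. }
  assert (HXm : X - x2 * x2 * m < 0) by nia.
  assert (HYm : Y - y2 * y2 * m > 0) by nia.
  split; [exact HX | nia].
Qed.

(* In the situation of [jump_signs], the vertex c = +-(1,s) between p and d (the next
   vertex of the fan at a) gives a rung ac crossed by xy, strictly between ap and ad. *)
Lemma jump_at_standard_edge x1 x2 y1 y2 d1 d2 e s :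
  d2 * d2 = 1 -> e * e = 1 -> s * s = 1 -> s * (d1 * d2) >= 2 ->
  separates (x1, x2) (y1, y2) (1, 0) (0, 1) ->
  separates (x1, x2) (y1, y2) (1, 0) (d1, d2) ->
  separates (x1, x2) (d1, d2) (1, 0) (0, 1) ->
  separates (x1, x2) (y1, y2) (1, 0) (e, e * s) /\
  ~ separates (x1, x2) (0, 1) (1, 0) (e, e * s) /\
  ~ separates (x1, x2) (e, e * s) (1, 0) (d1, d2).
Proof.
  intros Hd He Hs Hm Sxy Sxyd Sxd.
  destruct (jump_signs x1 x2 y1 y2 d1 d2 s Hd Hs Hm Sxy Sxyd Sxd) as [HX HY].
  unfold separates, fdet; cbn [fst snd].
  set (m := s * (d1 * d2)) in *. set (X := s * (x1 * x2)) in *.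
  assert (HX1 : X - x2 * x2 < 0) by nia.
  split; [| split].
  - replace ((x1 * 0 - x2 * 1) * (y1 * (e * s) - y2 * e) *
             (x1 * (e * s) - x2 * e) * (y1 * 0 - y2 * 1))
      with ((e * e) * (X - x2 * x2) * (s * (y1 * y2) - y2 * y2)) by (unfold X; ring).
    rewrite He. nia.
  - replace ((x1 * 0 - x2 * 1) * (0 * (e * s) - 1 * e) * (x1 * (e * s) - x2 * e) * (0 * 0 - 1 * 1))
      with (- (e * e) * (X - x2 * x2)) by (unfold X; ring).
    rewrite He. nia.
  - assert (Fx : s * x2 * (x1 * d2 - x2 * d1) = d2 * (X - x2 * x2 * m)).
    { transitivity (s * x1 * x2 * d2 - s * x2 * x2 * d1 * (d2 * d2));
        [rewrite Hd; ring | unfold X, m; ring]. }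
    assert (Fd : d2 - s * d1 = d2 * (1 - m)).
    { transitivity (d2 - s * d1 * (d2 * d2)); [rewrite Hd; ring | unfold m; ring]. }
    replace ((x1 * 0 - x2 * 1) * (e * d2 - e * s * d1) * (x1 * d2 - x2 * d1) * (e * 0 - e * s * 1))
      with ((e * e) * (s * x2 * (x1 * d2 - x2 * d1)) * (d2 - s * d1)) by ring.
    rewrite He, Fx, Fd.
    replace (1 * (d2 * (X - x2 * x2 * m)) * (d2 * (1 - m)))
      with ((d2 * d2) * (X - x2 * x2 * m) * (1 - m)) by ring.
    rewrite Hd. nia.
Qed.

Lemma jump_step a p d x y :
  farey_adj a p -> farey_adj a d ->
  separates x y a p -> separates x y a d -> separates x d a p ->
  farey_adj p d \/
  exists c, farey_vertex c /\ farey_adj a c /\ c <> a /\ c <> p /\ c <> d /\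
    separates x y a c /\ ~ separates x p a c /\ ~ separates x c a d.
Proof.
  intros Hap Had Sxy Sxyd Sxd.
  rewrite (adj_coord a p Hap a d), coord_a in Had by exact Hap.
  rewrite (sep_coord a p Hap), coord_a, coord_b in Sxy, Sxd by exact Hap.
  rewrite (sep_coord a p Hap), coord_a in Sxyd by exact Hap.
  rewrite (adj_coord a p Hap p d), coord_b by exact Hap.
  destruct (coord a p d) as [d1 d2] eqn:Ed.
  unfold farey_adj, fdet in Had |- *; cbn [fst snd] in Had |- *.
  assert (Hd1 : d1 <> 0).
  { destruct (sep_fdet_nz _ _ _ _ Sxd) as [_ [h _]]. unfold fdet in h; cbn [fst snd] in h. lia. }
  destruct (Z.eq_dec (Z.abs d1) 1) as [h1 | h1]; [left; lia | right].
  assert (Hnz : d1 * d2 <> 0) by (apply Z.neq_mul_0; lia).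
  destruct (sgn_sq _ Hnz) as [Hs2 Hsg].
  destruct (vertex_with_coord a p Hap (Z.sgn (d1 * d2))) as [c [e [He [Hc Ec]]]].
  exists c.
  rewrite (adj_coord a p Hap a c), (sep_coord a p Hap x y a c), (sep_coord a p Hap x p a c),
    (sep_coord a p Hap x c a d), coord_a, coord_b, Ec, Ed by exact Hap.
  destruct (coord a p x) as [x1 x2], (coord a p y) as [y1 y2].
  destruct (jump_at_standard_edge x1 x2 y1 y2 d1 d2 e (Z.sgn (d1 * d2))) as [S1 [N1 N2]];
    auto; try nia.
  split; [exact Hc |].
  split; [unfold farey_adj, fdet; cbn [fst snd]; destruct He as [-> | ->]; nia |].
  split; [intros ->; rewrite coord_a in Ec by exact Hap; injection Ec; nia |].
  split; [intros ->; rewrite coord_b in Ec by exact Hap; injection Ec; nia |].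
  split; [intros ->; rewrite Ec in Ed; injection Ed; nia |].
  auto.
Qed.

Lemma side_at_standard_edge x1 x2 c1 c2 : x1 * x2 <> 0 ->
  (c1, c2) = (0, 1) \/ x1 * x2 * (c1 * c2) < 0 ->
  x1 * (c2 * (x1 * c2 - x2 * c1)) > 0.
Proof.
  intros Hx [Hc | Hc].
  - injection Hc as -> ->. nia.
  - replace (x1 * (c2 * (x1 * c2 - x2 * c1))) with ((x1 * c2) * (x1 * c2) - x1 * x2 * (c1 * c2))
      by ring. nia.
Qed.

(* Two edges cd, both ending at u or beyond zu as seen from x, do not separate x from z:
   both c and d lie on the same side of the line through x and z. *)
Lemma rungs_at_vertex_do_not_cross z u c d x y :
  farey_adj z u -> separates x y z u ->
  (c = u \/ separates x c z u) -> (d = u \/ separates x d z u) ->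
  ~ separates x z c d.
Proof.
  intros Hzu Hs Hc Hd.
  assert (Side : forall t, t = u \/ separates x t z u ->
            coord z u t = (0, 1) \/
            separates (coord z u x) (coord z u t) (1, 0) (0, 1)).
  { intros t [-> | Ht]; [left; apply coord_b; exact Hzu |].
    right. rewrite <- (coord_a z u Hzu), <- (coord_b z u Hzu).
    apply (proj1 (sep_coord z u Hzu x t z u)); exact Ht. }
  apply Side in Hc, Hd.
  rewrite (sep_coord z u Hzu), coord_a in Hs |- * by exact Hzu. rewrite coord_b in Hs by exact Hzu.
  destruct (coord z u x) as [x1 x2], (coord z u c) as [c1 c2], (coord z u d) as [d1 d2].
  assert (Hx : x1 * x2 <> 0).
  { destruct (sep_fdet_nz _ _ _ _ Hs) as [h1 [_ [h2 _]]].
    unfold fdet in h1, h2; cbn [fst snd] in h1, h2. apply Z.neq_mul_0; lia. }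
  unfold separates, fdet in *; cbn [fst snd] in *.
  assert (Fc : x1 * (c2 * (x1 * c2 - x2 * c1)) > 0)
    by (apply side_at_standard_edge; auto; destruct Hc; [left | right]; auto; nia).
  assert (Fd : x1 * (d2 * (x1 * d2 - x2 * d1)) > 0)
    by (apply side_at_standard_edge; auto; destruct Hd; [left | right]; auto; nia).
  assert (Hprod : (c2 * (x1 * c2 - x2 * c1)) * (d2 * (x1 * d2 - x2 * d1)) > 0) by nia.
  nia.
Qed.

(* The side of the edge ab on which t lies is the sign of [side a b t]; it vanishes
   exactly at a and b, and cannot change strictly along a Farey edge. *)
Definition side (a b t : V) : Z := fdet t a * fdet t b.

Lemma side_zero a b t : farey_vertex a -> farey_vertex b -> farey_vertex t ->
  side a b t = 0 -> t = a \/ t = b.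
Proof.
  unfold side; intros Ha Hb Ht H.
  apply Z.mul_eq_0 in H as [H | H]; [left | right]; apply vertex_eq_of_fdet0; auto.
Qed.

Lemma side_along_edge a b u w : farey_adj u w -> farey_adj a b ->
  0 <= side a b u * side a b w.
Proof.
  unfold side; intros Huw Hab. pose proof (farey_edges_do_not_cross u w a b Huw Hab).
  unfold separates in *. nia.
Qed.

Lemma chain_meets_edge a b : farey_vertex a -> farey_vertex b -> farey_adj a b ->
  forall l u d, adj_chain (u :: l) -> Forall farey_vertex (u :: l) ->
  side a b u * side a b (last (u :: l) d) < 0 ->
  exists z, In z (u :: l) /\ (z = a \/ z = b).
Proof.
  intros Ha Hb Hab. induction l as [|u' l IH]; intros u d Hc Hf Hs.
  - simpl in Hs. nia.
  - destruct Hc as [Huu Hc]. inversion Hf as [|? ? Hu Hf']; subst.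
    destruct (Z.eq_dec (side a b u') 0) as [h0 | h0].
    + exists u'. split; [right; left; reflexivity |].
      apply side_zero; auto. inversion Hf'; auto.
    + pose proof (side_along_edge a b u u' Huu Hab) as Hge.
      change (last (u :: u' :: l) d) with (last (u' :: l) d) in Hs.
      destruct (IH u' d Hc Hf') as [z [Hz Hab']]; [nia |].
      exists z. split; [right |]; auto.
Qed.

Lemma path_meets_rung x y q a b : farey_path x y q -> farey_vertex a -> farey_vertex b ->
  farey_adj a b -> separates x y a b -> exists z, In z q /\ (z = a \/ z = b).
Proof.
  intros [Hne [Hhd [Hl [Hf Hc]]]] Ha Hb Hab Hs.
  destruct q as [|u l]; [congruence |]. simpl in Hhd. subst u.
  apply (chain_meets_edge a b Ha Hb Hab l x x); auto.
  rewrite Hl. unfold side, separates in *. nia.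
Qed.

Definition Veq_dec (u w : V) : {u = w} + {u <> w}.
Proof. decide equality; apply Z.eq_dec. Defined.

Lemma endpoint_dec z e : {endpoint z e} + {~ endpoint z e}.
Proof.
  unfold endpoint. destruct (Veq_dec z (fst e)); [left; auto |].
  destruct (Veq_dec z (snd e)); [left; auto | right; tauto].
Qed.

Lemma endpoint_cases t u w e : endpoint t e -> endpoint u e -> endpoint w e -> u <> w ->
  t = u \/ t = w.
Proof. unfold endpoint; intros [-> | ->] [-> | ->] [-> | ->] h; tauto. Qed.

Lemma endpoints_ordered u w e : endpoint u e -> endpoint w e -> u <> w ->
  (u = fst e /\ w = snd e) \/ (u = snd e /\ w = fst e).
Proof. unfold endpoint; intros [-> | ->] [-> | ->] h; tauto. Qed.

Lemma sep_endpoints x z u w e : endpoint u e -> endpoint w e -> u <> w ->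
  separates x z (fst e) (snd e) -> separates x z u w.
Proof.
  intros Hu Hw Hne Hs.
  destruct (endpoints_ordered u w e Hu Hw Hne) as [[-> ->] | [-> ->]]; auto using sep_swap.
Qed.

Lemma adj_endpoints u w e : endpoint u e -> endpoint w e -> u <> w ->
  farey_adj (fst e) (snd e) -> farey_adj u w.
Proof.
  intros Hu Hw Hne Hs.
  destruct (endpoints_ordered u w e Hu Hw Hne) as [[-> ->] | [-> ->]]; auto using adj_sym.
Qed.

Lemma same_edge_of u w e f : endpoint u e -> endpoint w e -> u <> w ->
  endpoint u f -> endpoint w f -> same_edge e f.
Proof.
  intros H1 H2 Hne H3 H4.
  destruct (endpoints_ordered u w e H1 H2 Hne) as [[E1 E2] | [E1 E2]];
  destruct (endpoints_ordered u w f H3 H4 Hne) as [[F1 F2] | [F1 F2]];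
  destruct e as [e1 e2], f as [f1 f2]; simpl in *; subst; unfold same_edge; simpl; auto.
Qed.

Lemma same_edge_endpoint t e f : same_edge e f -> endpoint t e <-> endpoint t f.
Proof.
  destruct e, f; unfold same_edge, endpoint; simpl; intros [h | h]; inversion h; subst; tauto.
Qed.

Definition other (e : V * V) (z : V) : V := if Veq_dec z (fst e) then snd e else fst e.

Lemma other_endpoint e z : endpoint (other e z) e.
Proof. unfold other; destruct (Veq_dec z (fst e)); [right | left]; auto. Qed.

Lemma other_cases e z t : endpoint z e -> endpoint t e -> t = z \/ t = other e z.
Proof.
  unfold other, endpoint; intros Hz Ht. destruct (Veq_dec z (fst e)) as [h | h].
  - destruct Ht as [-> | ->]; auto.
  - destruct Hz as [Hz | Hz]; [contradiction |]. destruct Ht as [-> | ->]; auto.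
Qed.

Lemma other_neq e z : fst e <> snd e -> endpoint z e -> other e z <> z.
Proof.
  unfold other, endpoint; intros Hne Hz. destruct (Veq_dec z (fst e)) as [h | h].
  - subst; auto.
  - destruct Hz; [contradiction | subst; auto].
Qed.

Section Ladder.
Variables (x y : V) (E : list (V * V)).
Hypothesis (Hx : farey_vertex x) (Hy : farey_vertex y) (HR : ladder_rungs x y E).

Notation M := (length E).
Notation Ek k := (nth k E e0).

Lemma rungs_nonempty : (1 <= M)%nat.
Proof. destruct HR as [H _]. destruct E; [congruence | simpl; lia]. Qed.

Lemma rung_nth k : (k < M)%nat -> rung x y (Ek k).
Proof. intros h. destruct HR as [_ [H _]]. apply H, nth_In, h. Qed.

Lemma rung_order i j : (i < j < M)%nat -> ~ same_edge (Ek i) (Ek j) /\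
  forall z, endpoint z (Ek j) -> ~ endpoint z (Ek i) ->
    separates x z (fst (Ek i)) (snd (Ek i)).
Proof. destruct HR as [_ [_ [_ H]]]. apply H. Qed.

Lemma rung_index e : rung x y e -> exists j, (j < M)%nat /\ same_edge e (Ek j).
Proof.
  intros h. destruct HR as [_ [_ [H _]]]. destruct (H e h) as [f [Hf Hs]].
  destruct (In_nth E f e0 Hf) as [j [Hj Hj']]. exists j; split; auto. rewrite Hj'; auto.
Qed.

Lemma rung_vertex k t : (k < M)%nat -> endpoint t (Ek k) -> farey_vertex t.
Proof. intros h [-> | ->]; destruct (rung_nth k h) as [? [? _]]; auto. Qed.

Lemma rung_ends_distinct k : (k < M)%nat -> fst (Ek k) <> snd (Ek k).
Proof. intros h. destruct (rung_nth k h) as [_ [_ [Ha _]]]. apply adj_neq; auto. Qed.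

Lemma rung_adj k u w : (k < M)%nat -> endpoint u (Ek k) -> endpoint w (Ek k) -> u <> w ->
  farey_adj u w.
Proof.
  intros h Hu Hw Hne. destruct (rung_nth k h) as [_ [_ [Ha _]]].
  apply (adj_endpoints u w (Ek k)); auto.
Qed.

Lemma rung_separates k u w : (k < M)%nat -> endpoint u (Ek k) -> endpoint w (Ek k) -> u <> w ->
  separates x y u w.
Proof.
  intros h Hu Hw Hne. destruct (rung_nth k h) as [_ [_ [_ Hs]]].
  apply (sep_endpoints x y u w (Ek k)); auto.
Qed.

Lemma rung_order_sep i j z u w : (i < j < M)%nat -> endpoint z (Ek j) -> ~ endpoint z (Ek i) ->
  endpoint u (Ek i) -> endpoint w (Ek i) -> u <> w -> separates x z u w.
Proof.
  intros h Hz Hz' Hu Hw Hne. apply (sep_endpoints x z u w (Ek i)); auto.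
  apply (proj2 (rung_order i j h)); auto.
Qed.

(* x and y are not endpoints of rungs, since rungs cross the geodesic xy. *)
Lemma x_not_on_rung k : (k < M)%nat -> ~ endpoint x (Ek k).
Proof.
  intros hk [h | h]; destruct (rung_nth k hk) as [_ [_ [_ Hs]]];
  rewrite <- h in Hs; [apply (sep_self_l x y _ Hs) | apply (sep_self_r x y _ Hs)].
Qed.

Lemma y_not_on_rung k : (k < M)%nat -> ~ endpoint y (Ek k).
Proof.
  intros hk [h | h]; destruct (rung_nth k hk) as [_ [_ [_ Hs]]]; apply sep_swap_ends in Hs;
  rewrite <- h in Hs; [apply (sep_self_l y x _ Hs) | apply (sep_self_r y x _ Hs)].
Qed.

Lemma x_ne_y : x <> y.
Proof.
  intros Hxy. destruct (rung_nth 0 rungs_nonempty) as [_ [_ [_ Hs]]].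
  rewrite <- Hxy in Hs. apply (sep_diag x _ _ Hs).
Qed.

Lemma rung_through u c : farey_vertex u -> farey_vertex c -> farey_adj u c ->
  separates x y u c ->
  exists j, (j < M)%nat /\ endpoint u (Ek j) /\ endpoint c (Ek j).
Proof.
  intros Hu Hc Huc Hs.
  assert (Hr : rung x y (u, c)) by exact (conj Hu (conj Hc (conj Huc Hs))).
  destruct (rung_index _ Hr) as [j [Hj Hsj]].
  exists j. split; [auto |].
  split; apply (same_edge_endpoint _ _ _ Hsj); [left | right]; reflexivity.
Qed.

(* x is adjacent to both endpoints of the first rung: otherwise the Farey triangle on
   x's side of the first rung would contribute an earlier rung. *)
Lemma x_adj_first_rung t : endpoint t (Ek 0) -> farey_adj x t.
Proof.
  intros Ht. pose proof rungs_nonempty as HM.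
  destruct (rung_nth 0 HM) as [Ha [Hb [Hab Hs]]].
  destruct (triangle_step _ _ x y Hx Hab Hs)
    as [[h1 h2] | [u [v [c [Huv [Hc [Huc [Hca [Hcb [Hn [S1 _]]]]]]]]]]].
  - destruct Ht as [-> | ->]; auto.
  - exfalso.
    assert (Hu : farey_vertex u) by (destruct Huv as [[-> _] | [-> _]]; auto).
    destruct (rung_through u c Hu Hc Huc S1) as [j [Hj [_ Ecj]]].
    destruct j as [|j].
    + destruct Ecj as [h | h]; auto.
    + apply Hn, (rung_order_sep 0 (S j) c); try lia; auto; try (left; reflexivity);
        try (right; reflexivity); [intros [h | h]; auto | apply adj_neq; auto].
Qed.

Lemma y_adj_last_rung t : endpoint t (Ek (M - 1)) -> farey_adj y t.
Proof.
  intros Ht. pose proof rungs_nonempty as HM. assert (hM : (M - 1 < M)%nat) by lia.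
  destruct (rung_nth (M - 1) hM) as [Ha [Hb [Hab Hs]]].
  destruct (triangle_step _ _ y x Hy Hab (sep_swap_ends _ _ _ _ Hs))
    as [[h1 h2] | [u [v [c [Huv [Hc [Huc [Hca [Hcb [_ [S1 N2]]]]]]]]]]].
  - destruct Ht as [-> | ->]; auto.
  - exfalso.
    assert (Hu : farey_vertex u) by (destruct Huv as [[-> _] | [-> _]]; auto).
    destruct (rung_through u c Hu Hc Huc (sep_swap_ends _ _ _ _ S1)) as [j [Hj [Euj Ecj]]].
    assert (Ev : endpoint v (Ek (M - 1)))
      by (destruct Huv as [[_ ->] | [_ ->]]; [right | left]; auto).
    assert (Hvu : v <> u) by (destruct Huv as [[-> ->] | [-> ->]]; [apply not_eq_sym |];
      apply adj_neq; auto).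
    assert (Hvc : v <> c) by (destruct Huv as [[_ ->] | [_ ->]]; auto).
    destruct (Nat.eq_dec j (M - 1)) as [-> | hj].
    + destruct Ecj as [h | h]; auto.
    + apply N2, (rung_order_sep j (M - 1) v u c); auto; try lia.
      * intro h. destruct (endpoint_cases v u c _ h Euj Ecj (adj_neq _ _ Huc)); auto.
      * apply adj_neq; auto.
Qed.

Lemma consecutive_rungs_triangle k p a d : (1 <= k)%nat -> (k < M)%nat ->
  endpoint p (Ek (k - 1)) -> endpoint a (Ek (k - 1)) -> endpoint a (Ek k) -> endpoint d (Ek k) ->
  p <> a -> a <> d -> farey_adj p d.
Proof.
  intros h1 h2 Hp Ha1 Ha2 Hd Hpa Had.
  assert (hk : (k - 1 < k < M)%nat) by lia.
  assert (hk1 : (k - 1 < M)%nat) by lia.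
  assert (Hdp : d <> p).
  { intros ->. apply (proj1 (rung_order (k - 1) k hk)). apply (same_edge_of p a); auto. }
  assert (Hdn : ~ endpoint d (Ek (k - 1))).
  { intro h. destruct (endpoint_cases d p a _ h Hp Ha1 Hpa); auto. }
  destruct (jump_step a p d x y) as [H | [c [Hc [Hac [Hca [Hcp [Hcd [S1 [N1 N2]]]]]]]]];
    auto.
  - apply (rung_adj (k - 1)); auto.
  - apply (rung_adj k); auto.
  - apply (rung_separates (k - 1)); auto.
  - apply (rung_separates k); auto.
  - apply (rung_order_sep (k - 1) k d a p); auto.
  - exfalso.
    assert (Hfa : farey_vertex a) by (apply (rung_vertex k); auto).
    destruct (rung_through a c Hfa Hc Hac S1) as [j [Hj [EA EC]]].
    destruct (Nat.lt_trichotomy j (k - 1)) as [hj | [-> | hj]].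
    + apply N1, (rung_order_sep j (k - 1) p a c); auto; try lia.
      intro h. destruct (endpoint_cases p a c _ h EA EC); auto.
    + destruct (endpoint_cases c p a _ EC Hp Ha1 Hpa); auto.
    + destruct (Nat.eq_dec j k) as [-> | hjk].
      * destruct (endpoint_cases c a d _ EC Ha2 Hd Had); auto.
      * apply N2, (rung_order_sep k j c a d); auto; try lia.
        intro h. destruct (endpoint_cases c a d _ h Ha2 Hd Had); auto.
Qed.

Lemma rungs_at_vertex_contiguous i k j z : (i < k < j)%nat -> (j < M)%nat ->
  endpoint z (Ek i) -> endpoint z (Ek j) -> endpoint z (Ek k).
Proof.
  intros h hj Hi Hj.
  destruct (endpoint_dec z (Ek k)) as [e | ne]; auto. exfalso.
  assert (hi : (i < M)%nat) by lia. assert (hk : (k < M)%nat) by lia.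
  set (u := other (Ek i) z).
  assert (Hu : endpoint u (Ek i)) by apply other_endpoint.
  assert (Hzu : z <> u) by (apply not_eq_sym, other_neq; auto; apply rung_ends_distinct; auto).
  assert (Gc : forall t, endpoint t (Ek k) -> t = u \/ separates x t z u).
  { intros t Ht. destruct (endpoint_dec t (Ek i)) as [e | e].
    - left. destruct (endpoint_cases t z u _ e Hi Hu Hzu) as [-> | ->]; auto. contradiction.
    - right. apply (rung_order_sep i k t z u); auto; lia. }
  apply (rungs_at_vertex_do_not_cross z u (fst (Ek k)) (snd (Ek k)) x y).
  - apply (rung_adj i); auto.
  - apply (rung_separates i); auto.
  - apply Gc; left; reflexivity.
  - apply Gc; right; reflexivity.
  - apply (proj2 (rung_order k j ltac:(lia))); auto.
Qed.

End Ladder.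

Section Pivots.
Variables (x y : V) (E : list (V * V)) (w : list V).
Hypothesis (Hx : farey_vertex x) (Hy : farey_vertex y) (HR : ladder_rungs x y E)
  (HP : ladder_pivots E w).

Notation M := (length E).
Notation Ek k := (nth k E e0).
Notation W k := (nth k w v0).

Lemma pivots_length : length w = S M.
Proof. destruct HP as [H _]; auto. Qed.

Lemma pivot_first : W 0 = W 1.
Proof. destruct HP as [_ [_ [H _]]]; auto. Qed.

Lemma pivot_last : W M = W (M - 1).
Proof.
  destruct HP as [HL [_ [_ [_ H]]]]. rewrite HL in H.
  replace (S M - 1)%nat with M in H by lia. replace (S M - 2)%nat with (M - 1)%nat in H by lia.
  auto.
Qed.

(* The triangle T_{k+1} lies between the rungs E_k and E_{k+1} (0-based), so the pivots
   W k and W (k+1) are both endpoints of the rung E_k. *)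
Lemma pivots_on_rung k : (k < M)%nat -> endpoint (W k) (Ek k) /\ endpoint (W (S k)) (Ek k).
Proof.
  intros hk. pose proof pivot_last as HWM. destruct HP as [HL [Hmid [_ [H0 _]]]].
  rewrite HL in Hmid. split.
  - destruct k as [|k]; auto. apply (Hmid (S k)); lia.
  - destruct (Nat.eq_dec (S k) M) as [e | e].
    + rewrite e, HWM. replace (M - 1)%nat with k by lia.
      destruct k as [|k]; auto. apply (Hmid (S k)); lia.
    + replace k with (S k - 1)%nat at 2 by lia. apply (Hmid (S k)); lia.
Qed.

Lemma shared_vertex_is_pivot k z : (S k < M)%nat ->
  endpoint z (Ek k) -> endpoint z (Ek (S k)) -> z = W (S k).
Proof.
  intros hk H1 H2. destruct (Veq_dec z (W (S k))) as [e | ne]; auto. exfalso.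
  apply (proj1 (rung_order x y E HR k (S k) ltac:(lia))).
  apply (same_edge_of z (W (S k))); auto; [apply (pivots_on_rung k) | apply (pivots_on_rung (S k))];
    lia.
Qed.

Lemma common_vertex_is_pivot i j z : (i < j < M)%nat ->
  endpoint z (Ek i) -> endpoint z (Ek j) -> z = W (S i) /\ z = W j.
Proof.
  intros h Hi Hj.
  assert (Hon : forall k, (i <= k <= j)%nat -> endpoint z (Ek k)).
  { intros k hk. destruct (Nat.eq_dec k i) as [-> | ?]; auto.
    destruct (Nat.eq_dec k j) as [-> | ?]; auto.
    apply (rungs_at_vertex_contiguous x y E HR i k j); auto; lia. }
  split.
  - apply shared_vertex_is_pivot; [lia | auto | apply Hon; lia].
  - replace j with (S (j - 1)) by lia.
    apply shared_vertex_is_pivot; [lia | apply Hon; lia |]. replace (S (j - 1)) with j by lia. auto.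
Qed.

Lemma pivot_step_adj k : (k < M)%nat -> W k <> W (S k) -> farey_adj (W k) (W (S k)).
Proof. intros hk hne. apply (rung_adj x y E HR k); auto; apply pivots_on_rung; auto. Qed.

Lemma pivot_jump_adj k : (1 <= k)%nat -> (k < M)%nat -> W (k - 1) <> W k -> W k <> W (S k) ->
  farey_adj (W (k - 1)) (W (S k)).
Proof.
  intros h1 h2 n1 n2. apply (consecutive_rungs_triangle x y E HR k (W (k - 1)) (W k) (W (S k)));
    auto; try (apply pivots_on_rung; lia).
  replace k with (S (k - 1)) at 1 by lia. apply pivots_on_rung; lia.
Qed.

Lemma x_adj_first_pivot : farey_adj x (W 0).
Proof.
  pose proof (rungs_nonempty x y E HR).
  apply (x_adj_first_rung x y E Hx HR). apply pivots_on_rung; lia.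
Qed.

Lemma last_pivot_adj_y : farey_adj (W M) y.
Proof.
  pose proof (rungs_nonempty x y E HR).
  apply adj_sym, (y_adj_last_rung x y E Hy HR). rewrite pivot_last. apply pivots_on_rung; lia.
Qed.

End Pivots.

Lemma length_induction {A : Type} (P : list A -> Prop) :
  (forall l, (forall l', (length l' < length l)%nat -> P l') -> P l) -> forall l, P l.
Proof.
  intros H. assert (Hn : forall n l, (length l <= n)%nat -> P l).
  { induction n as [|n IHn]; intros l h; apply H; intros l' h'; [lia | apply IHn; lia]. }
  intros l; apply (Hn (length l)); lia.
Qed.

Lemma nodup_app_disjoint {A : Type} (l1 l2 : list A) t : NoDup (l1 ++ l2) -> In t l1 -> ~ In t l2.
Proof.
  intros Hnd Ht h. apply in_split in Ht as [h1 [h2 ->]].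
  rewrite <- app_assoc in Hnd. apply (NoDup_remove_2 _ _ _ Hnd).
  apply in_or_app; right; apply in_or_app; right; exact h.
Qed.

Lemma last_in {A : Type} (l : list A) d : l <> [] -> In (last l d) l.
Proof.
  induction l as [|u l IH]; intros H; [congruence |].
  destruct l as [|u' l]; [left; reflexivity | right; apply IH; discriminate].
Qed.

Lemma map_fst_combine {A B : Type} (a : list A) (b : list B) :
  length a = length b -> map fst (combine a b) = a.
Proof.
  revert b; induction a as [|u a IH]; intros [|t b] h; simpl in *; try lia; auto.
  rewrite IH; auto.
Qed.

Lemma map_snd_combine {A B : Type} (a : list A) (b : list B) :
  length a = length b -> map snd (combine a b) = b.
Proof.
  revert b; induction a as [|u a IH]; intros [|t b] h; simpl in *; try lia; auto.
  rewrite IH; auto.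
Qed.

(* A run of the ladder: its length, its common pivot, and the endpoint other than the
   pivot of its first rung. *)
Record run : Type := Run { run_len : nat; run_pivot : V; run_far : V }.

Definition run_walk (y : V) (rs : list run) : list V :=
  eff_go (map run_pivot rs ++ [y]) (map run_len rs).

Lemma run_walk_cons y r rs : run_walk y (r :: rs) =
  if Nat.eqb (run_len r) 1 then
    match rs with [] => [y] | r' :: rs' => run_pivot r' :: run_walk y rs' end
  else run_pivot r :: run_walk y rs.
Proof.
  unfold run_walk. simpl. destruct (Nat.eqb (run_len r) 1); auto.
  destruct rs; reflexivity.
Qed.

Lemma run_walk_shape y rs : exists l, run_walk y rs = l ++ [y] /\ incl l (map run_pivot rs).
Proof.
  induction rs as [rs IH] using length_induction.
  destruct rs as [|r rs]; [exists []; split; [reflexivity | intros z []] |].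
  rewrite run_walk_cons. destruct (Nat.eqb (run_len r) 1).
  - destruct rs as [|r' rs']; [exists []; split; [reflexivity | intros z []] |].
    destruct (IH rs') as [l [Hl Hi]]; [simpl; lia |].
    exists (run_pivot r' :: l). rewrite Hl; split; [reflexivity |].
    intros z [<- | hz]; simpl; [auto | right; right; apply Hi, hz].
  - destruct (IH rs) as [l [Hl Hi]]; [simpl; lia |].
    exists (run_pivot r :: l). rewrite Hl; split; [reflexivity |].
    intros z [<- | hz]; simpl; [auto | right; apply Hi, hz].
Qed.

Fixpoint walk_adjacent (y p : V) (rs : list run) : Prop :=
  match rs with
  | [] => farey_adj p y
  | r :: rs' => farey_adj p (run_pivot r) /\
      (run_len r = 1%nat ->
         match rs' with r' :: _ => farey_adj p (run_pivot r') | [] => False end) /\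
      walk_adjacent y (run_pivot r) rs'
  end.

Lemma run_walk_chain y rs p : walk_adjacent y p rs -> adj_chain (p :: run_walk y rs).
Proof.
  revert p. induction rs as [rs IH] using length_induction. intros p HG.
  destruct rs as [|r rs]; [simpl in *; auto |].
  destruct HG as [H1 [H2 H3]].
  rewrite run_walk_cons. destruct (Nat.eqb (run_len r) 1) eqn:Ea.
  - apply Nat.eqb_eq in Ea. specialize (H2 Ea).
    destruct rs as [|r' rs']; [contradiction |].
    destruct H3 as [_ [_ H3]].
    split; [auto | apply IH; auto; simpl; lia].
  - split; [auto | apply IH; auto; simpl; lia].
Qed.

Definition marks_of (r : run) : list V :=
  if Nat.eqb (run_len r) 1 then [run_pivot r] else [run_pivot r; run_far r].

Definition run_marks (rs : list run) : list V := concat (map marks_of rs).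

Lemma run_marks_cons r rs : run_marks (r :: rs) = marks_of r ++ run_marks rs.
Proof. reflexivity. Qed.

Fixpoint runs_met (P : list V) (rs : list run) : Prop :=
  match rs with
  | [] => True
  | r :: rs' => (run_len r <> 1%nat -> In (run_pivot r) P \/ In (run_far r) P) /\
      (match rs' with r' :: _ => In (run_pivot r) P \/ In (run_pivot r') P | [] => True end) /\
      runs_met P rs'
  end.

Lemma extend_witnesses (P H T Wt : list V) z : NoDup (H ++ T) -> In z H -> In z P ->
  NoDup Wt -> incl Wt P -> incl Wt T ->
  NoDup (z :: Wt) /\ incl (z :: Wt) P /\ incl (z :: Wt) (H ++ T).
Proof.
  intros Hnd Hz HzP HW1 HW2 HW3. split; [| split].
  - constructor; auto. intro h. apply HW3 in h.
    apply (nodup_app_disjoint H T z Hnd Hz h).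
  - intros t [<- | ht]; auto.
  - intros t [<- | ht]; apply in_or_app; auto.
Qed.

Lemma runs_met_count y (P : list V) rs : NoDup (run_marks rs) -> runs_met P rs ->
  exists Wt, NoDup Wt /\ incl Wt P /\ incl Wt (run_marks rs) /\
    S (length Wt) = length (run_walk y rs).
Proof.
  induction rs as [rs IH] using length_induction. intros Hnd Hh.
  destruct rs as [|r rs]; [exists []; repeat split; [constructor | intros z [] ..] |].
  destruct Hh as [H1 [H2 H3]].
  rewrite run_walk_cons. rewrite run_marks_cons in Hnd |- *. unfold marks_of in Hnd |- *.
  destruct (Nat.eqb (run_len r) 1) eqn:Ea.
  - destruct rs as [|r' rs']; [exists []; repeat split; [constructor | intros z [] ..] |].
    destruct H3 as [_ [_ H3]]. rewrite run_marks_cons, app_assoc in Hnd |- *.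
    assert (HK : In (run_pivot r') (marks_of r'))
      by (unfold marks_of; destruct (Nat.eqb (run_len r') 1); simpl; auto).
    destruct (IH rs') as [Wt [HW1 [HW2 [HW3 HW4]]]];
      [simpl; lia | eapply NoDup_app_remove_l; eauto | auto |].
    assert (Hz : exists z, In z ([run_pivot r] ++ marks_of r') /\ In z P).
    { destruct H2 as [Hz | Hz]; eexists; (split; [| exact Hz]); simpl; auto. }
    destruct Hz as [z [Hz HzP]].
    destruct (extend_witnesses _ _ _ _ z Hnd Hz HzP HW1 HW2 HW3) as [N [I1 I2]].
    exists (z :: Wt). simpl; auto.
  - destruct (IH rs) as [Wt [HW1 [HW2 [HW3 HW4]]]];
      [simpl; lia | eapply NoDup_app_remove_l; eauto | auto |].
    rewrite Nat.eqb_neq in Ea.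
    assert (Hz : exists z, In z [run_pivot r; run_far r] /\ In z P).
    { destruct (H1 Ea) as [Hz | Hz]; eexists; (split; [| exact Hz]); simpl; auto. }
    destruct Hz as [z [Hz HzP]].
    destruct (extend_witnesses _ _ _ _ z Hnd Hz HzP HW1 HW2 HW3) as [N [I1 I2]].
    exists (z :: Wt). simpl; auto.
Qed.

Lemma pivots_in_marks rs : incl (map run_pivot rs) (run_marks rs).
Proof.
  induction rs as [|r rs IH]; intros t Ht; [destruct Ht |].
  rewrite run_marks_cons. apply in_or_app. destruct Ht as [<- | Ht].
  - left. unfold marks_of. destruct (Nat.eqb (run_len r) 1); left; reflexivity.
  - right. apply IH, Ht.
Qed.

Definition flat (ru : list (nat * V)) : list V :=
  concat (map (fun kv => repeat (snd kv) (fst kv)) ru).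

Lemma flat_cons k z ru : flat ((k, z) :: ru) = repeat z k ++ flat ru.
Proof. reflexivity. Qed.

Section LadderRuns.
Variables (x y : V) (E : list (V * V)) (w : list V).
Hypothesis (Hx : farey_vertex x) (Hy : farey_vertex y) (HR : ladder_rungs x y E)
  (HP : ladder_pivots E w).

Notation M := (length E).
Notation Ek k := (nth k E e0).
Notation W k := (nth k w v0).

Fixpoint ladder_runs (s : nat) (ru : list (nat * V)) : list run :=
  match ru with
  | [] => []
  | (k, z) :: ru' => Run k z (other (Ek s) z) :: ladder_runs (s + k) ru'
  end.

Definition runs_at (s : nat) (ru : list (nat * V)) : Prop :=
  skipn s w = flat ru /\ length w = (s + length (flat ru))%nat /\
  Forall (fun kv => (1 <= fst kv)%nat) ru /\ consec_distinct (map snd ru).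

Lemma runs_at_next s k z ru : runs_at s ((k, z) :: ru) -> runs_at (s + k) ru.
Proof.
  intros [Hsk [Hl [Hpos Hcd]]]. rewrite flat_cons, length_app, repeat_length in Hl.
  split; [| split; [lia | split]].
  - rewrite Nat.add_comm, <- skipn_skipn, Hsk, flat_cons, skipn_app, repeat_length, Nat.sub_diag.
    rewrite skipn_all2 by (rewrite repeat_length; lia). reflexivity.
  - inversion Hpos; auto.
  - destruct ru as [|[k2 z2] ru]; [exact I | apply Hcd].
Qed.

Lemma runs_at_head s k z ru : runs_at s ((k, z) :: ru) ->
  (1 <= k)%nat /\ (s + k <= S M)%nat /\ forall j, (j < k)%nat -> W (s + j) = z.
Proof.
  intros [Hsk [Hl [Hpos _]]]. rewrite (pivots_length _ _ HP) in Hl.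
  rewrite flat_cons, length_app, repeat_length in Hl.
  split; [inversion Hpos; auto | split; [lia |]].
  intros j hj. rewrite <- nth_skipn, Hsk, flat_cons, app_nth1 by (rewrite repeat_length; auto).
  apply nth_repeat_lt; auto.
Qed.

Lemma run_boundary s k z ru : runs_at s ((k, z) :: ru) -> (s + k <= M)%nat -> W (s + k) <> z.
Proof.
  intros Hr hM. pose proof (runs_at_next _ _ _ _ Hr) as Hr'.
  destruct ru as [|[k2 z2] ru].
  - destruct Hr' as [_ [Hl _]]. rewrite (pivots_length _ _ HP) in Hl. simpl in Hl. lia.
  - destruct (runs_at_head _ _ _ _ Hr') as [hk2 [_ Hz2]].
    rewrite <- (Nat.add_0_r (s + k)), Hz2 by lia.
    destruct Hr as [_ [_ [_ [Hcd _]]]]. auto.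
Qed.

Lemma walk_adjacent_from ru : forall s, (1 <= s)%nat -> runs_at s ru ->
  match ru with (_, z) :: _ => W (s - 1) <> z | [] => True end ->
  walk_adjacent y (W (s - 1)) (ladder_runs s ru).
Proof.
  induction ru as [|[k z] ru IH]; intros s hs Hr Hne.
  - destruct Hr as [_ [Hl _]]. rewrite (pivots_length _ _ HP) in Hl. simpl in Hl.
    replace (s - 1)%nat with M by lia. apply (last_pivot_adj_y x y E w Hy HR HP).
  - destruct (runs_at_head _ _ _ _ Hr) as [hk [hM Hz]].
    pose proof (runs_at_next _ _ _ _ Hr) as Hr'.
    assert (HzS : W s = z) by (rewrite <- (Nat.add_0_r s); apply Hz; lia).
    split; [| split].
    + rewrite <- HzS in *. replace s with (S (s - 1)) at 2 by lia.
      apply (pivot_step_adj x y E w HR HP); [lia |]. replace (S (s - 1)) with s by lia. auto.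
    + simpl. intros ->.
      assert (hsM : (s + 1 <= M)%nat).
      { destruct (Nat.le_gt_cases (s + 1) M) as [h | h]; auto. exfalso. apply Hne.
        rewrite <- HzS. replace s with M by lia. rewrite (pivot_last _ _ HP). reflexivity. }
      destruct ru as [|[k2 z2] ru].
      * destruct Hr' as [_ [Hl _]]. rewrite (pivots_length _ _ HP) in Hl. simpl in Hl. lia.
      * destruct (runs_at_head _ _ _ _ Hr') as [hk2 [_ Hz2]].
        assert (Hz2S : W (S s) = z2) by (replace (S s) with (s + 1 + 0)%nat by lia; apply Hz2; lia).
        simpl. rewrite <- Hz2S.
        apply (pivot_jump_adj x y E w HR HP); [lia | lia | congruence |].
        rewrite HzS, Hz2S. destruct Hr as [_ [_ [_ [Hcd _]]]]. exact Hcd.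
    + replace (run_pivot (Run k z (other (Ek s) z))) with (W (s + k - 1)).
      * apply IH; [lia | auto |].
        destruct ru as [|[k2 z2] ru]; auto. simpl.
        replace (s + k - 1)%nat with (s + (k - 1))%nat by lia. rewrite Hz by lia.
        destruct Hr as [_ [_ [_ [Hcd _]]]]. auto.
      * replace (s + k - 1)%nat with (s + (k - 1))%nat by lia. simpl. apply Hz; lia.
Qed.

Definition mark_ok (s : nat) (t : V) : Prop :=
  exists k, (s - 1 <= k < M)%nat /\ endpoint t (Ek k) /\
    ((1 <= s)%nat -> k = (s - 1)%nat -> t = W s).

Lemma mark_ok_weaken s k t : (1 <= k)%nat -> mark_ok (s + k) t -> mark_ok s t.
Proof. intros hk [k' [h1 [h2 h3]]]. exists k'. repeat split; auto; lia. Qed.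

Lemma head_marks_ok s k z ru : runs_at s ((k, z) :: ru) ->
  NoDup (marks_of (Run k z (other (Ek s) z))) /\
  Forall (mark_ok s) (marks_of (Run k z (other (Ek s) z))).
Proof.
  intros Hr. destruct (runs_at_head _ _ _ _ Hr) as [hk [hM Hz]].
  assert (HzS : W s = z) by (rewrite <- (Nat.add_0_r s); apply Hz; lia).
  pose proof (rungs_nonempty x y E HR) as HM.
  assert (Qz : mark_ok s z).
  { destruct s as [|s].
    - exists 0%nat. rewrite <- HzS.
      split; [lia | split; [apply (pivots_on_rung _ _ HP); lia | lia]].
    - exists s. rewrite <- HzS.
      split; [lia | split; [apply (pivots_on_rung _ _ HP); lia | auto]]. }
  unfold marks_of; simpl. destruct (Nat.eqb k 1) eqn:e.
  - split; repeat constructor; auto.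
  - apply Nat.eqb_neq in e.
    assert (Hfar : other (Ek s) z <> z).
    { apply other_neq; [apply (rung_ends_distinct x y E HR); lia |].
      rewrite <- HzS. apply (pivots_on_rung _ _ HP); lia. }
    split; repeat constructor; auto.
    + intros [h | []]; auto.
    + exists s. split; [lia | split; [apply other_endpoint | lia]].
Qed.

Lemma head_marks_fresh s k z ru t : runs_at s ((k, z) :: ru) ->
  In t (marks_of (Run k z (other (Ek s) z))) -> ~ mark_ok (s + k) t.
Proof.
  intros Hr Ht [k' [h1 [h2 h3]]]. destruct (runs_at_head _ _ _ _ Hr) as [hk [hM Hz]].
  assert (HzS : W s = z) by (rewrite <- (Nat.add_0_r s); apply Hz; lia).
  assert (Ht' : t = z \/ (k <> 1%nat /\ t = other (Ek s) z)).
  { unfold marks_of in Ht; simpl in Ht. destruct (Nat.eqb_spec k 1); simpl in Ht;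
      [destruct Ht as [<- | []] | destruct Ht as [<- | [<- | []]]]; auto. }
  destruct Ht' as [-> | [hk1 ->]].
  - assert (Hzk : W (s + (k - 1)) = z) by (apply Hz; lia).
    assert (Ez : endpoint z (Ek (s + k - 1))).
    { rewrite <- Hzk. replace (s + (k - 1))%nat with (s + k - 1)%nat by lia.
      apply (pivots_on_rung _ _ HP); lia. }
    apply (run_boundary s k z ru Hr); [lia |].
    destruct (Nat.eq_dec k' (s + k - 1)) as [e | e].
    + symmetry. apply h3; lia.
    + symmetry. replace (s + k)%nat with (S (s + k - 1)) by lia.
      apply (proj1 (common_vertex_is_pivot x y E w HR HP (s + k - 1) k' z ltac:(lia) Ez h2)).
  - apply (other_neq (Ek s) z); [apply (rung_ends_distinct x y E HR); lia | |].
    + rewrite <- HzS. apply (pivots_on_rung _ _ HP); lia.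
    + assert (Hz1 : W (S s) = z) by (replace (S s) with (s + 1)%nat by lia; apply Hz; lia).
      rewrite <- Hz1 at 2.
      apply (proj1 (common_vertex_is_pivot x y E w HR HP s k' _ ltac:(lia)
                                           (other_endpoint _ _) h2)).
Qed.

Lemma marks_from ru : forall s, runs_at s ru ->
  NoDup (run_marks (ladder_runs s ru)) /\ Forall (mark_ok s) (run_marks (ladder_runs s ru)).
Proof.
  induction ru as [|[k z] ru IH]; intros s Hr; [split; constructor |].
  destruct (runs_at_head _ _ _ _ Hr) as [hk _].
  destruct (IH (s + k)%nat (runs_at_next _ _ _ _ Hr)) as [ND QT].
  destruct (head_marks_ok s k z ru Hr) as [NDh Qh].
  simpl ladder_runs. rewrite run_marks_cons. split.
  - apply NoDup_app; auto. intros t Ht Ht'.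
    apply (head_marks_fresh s k z ru t Hr Ht). rewrite Forall_forall in QT. auto.
  - apply Forall_app. split; auto.
    eapply Forall_impl; [| exact QT]. intros t. apply mark_ok_weaken; auto.
Qed.

(* A vertex list meeting every rung meets the requirements of all runs: the first rung of a
   run is {pivot, far end}, and the last rung of a run joins its pivot to the next pivot. *)
Lemma runs_met_from (P : list V) :
  (forall k, (k < M)%nat -> exists t, In t P /\ endpoint t (Ek k)) ->
  forall ru s, runs_at s ru -> runs_met P (ladder_runs s ru).
Proof.
  intros Hmeet. induction ru as [|[k z] ru IH]; intros s Hr; [exact I |].
  destruct (runs_at_head _ _ _ _ Hr) as [hk [hM Hz]].
  assert (HzS : W s = z) by (rewrite <- (Nat.add_0_r s); apply Hz; lia).
  pose proof (runs_at_next _ _ _ _ Hr) as Hr'.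
  split; [| split; [| apply IH; auto]]; simpl.
  - intros hk1. destruct (Hmeet s ltac:(lia)) as [t [Ht Hte]].
    assert (Hze : endpoint z (Ek s)) by (rewrite <- HzS; apply (pivots_on_rung _ _ HP); lia).
    destruct (other_cases _ _ _ Hze Hte) as [<- | ->]; auto.
  - destruct ru as [|[k2 z2] ru]; [exact I |]. simpl.
    destruct (runs_at_head _ _ _ _ Hr') as [hk2 [hM2 Hz2]].
    assert (Hz2S : W (S (s + k - 1)) = z2)
      by (replace (S (s + k - 1)) with (s + k + 0)%nat by lia; apply Hz2; lia).
    assert (Hzk : W (s + k - 1) = z)
      by (replace (s + k - 1)%nat with (s + (k - 1))%nat by lia; apply Hz; lia).
    destruct (Hmeet (s + k - 1)%nat ltac:(lia)) as [t [Ht Hte]].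
    destruct (pivots_on_rung _ _ HP (s + k - 1) ltac:(lia)) as [E1 E2].
    rewrite Hzk in E1. rewrite Hz2S in E2.
    destruct Hr as [_ [_ [_ [Hcd _]]]].
    destruct (endpoint_cases t z z2 _ Hte E1 E2 Hcd) as [<- | <-]; auto.
Qed.

Lemma ladder_runs_len ru : forall s, map run_len (ladder_runs s ru) = map fst ru.
Proof. induction ru as [|[k z] ru IH]; intros s; simpl; [| rewrite IH]; reflexivity. Qed.

Lemma ladder_runs_pivot ru : forall s, map run_pivot (ladder_runs s ru) = map snd ru.
Proof. induction ru as [|[k z] ru IH]; intros s; simpl; [| rewrite IH]; reflexivity. Qed.

Lemma runs_at_start a v : runs_of w a v -> runs_at 0 (combine a v).
Proof.
  intros [Hlen [Hpos [Hcd Hw]]]. unfold runs_at. rewrite map_snd_combine by exact Hlen.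
  split; [rewrite Hw; reflexivity | split; [rewrite Hw; reflexivity | split; [| exact Hcd]]].
  clear Hw Hcd. revert v Hlen. induction a as [|k a IH]; intros [|z v] Hlen; simpl; auto.
  inversion Hpos; constructor; auto.
Qed.

Section FromStart.
Variable ru : list (nat * V).
Hypothesis Hru : runs_at 0 ru.

(* The first run has length at least 2, since the first two ladder triangles share
   their pivot. *)
Lemma first_run_long : exists k z ru', ru = (k, z) :: ru' /\ (2 <= k)%nat.
Proof.
  pose proof (rungs_nonempty x y E HR) as HM.
  destruct ru as [|[k z] ru'].
  - destruct Hru as [_ [Hl _]]. rewrite (pivots_length _ _ HP) in Hl. simpl in Hl. lia.
  - exists k, z, ru'. split; [reflexivity |].
    destruct (runs_at_head _ _ _ _ Hru) as [hk [_ Hz]].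
    destruct (Nat.eq_dec k 1) as [-> | ]; [exfalso | lia].
    apply (run_boundary 0 1 z ru' Hru); [simpl; lia |].
    simpl. rewrite <- (pivot_first _ _ HP). apply (Hz 0%nat). lia.
Qed.

Lemma marks_on_rungs t : In t (run_marks (ladder_runs 0 ru)) ->
  exists k, (k < M)%nat /\ endpoint t (Ek k).
Proof.
  intros Ht. destruct (marks_from ru 0 Hru) as [_ Hok]. rewrite Forall_forall in Hok.
  destruct (Hok t Ht) as [k [hk [Hk _]]]. exists k. split; [lia | auto].
Qed.

Lemma efficient_walk_is_path : farey_path x y (x :: run_walk y (ladder_runs 0 ru)).
Proof.
  destruct (run_walk_shape y (ladder_runs 0 ru)) as [l [Hl Hi]].
  split; [discriminate | split; [reflexivity | split; [| split]]].
  - rewrite Hl, app_comm_cons, last_last. reflexivity.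
  - rewrite Hl. constructor; [auto |]. apply Forall_app. split; [| constructor; auto].
    apply Forall_forall. intros t ht.
    destruct (marks_on_rungs t (pivots_in_marks _ t (Hi t ht))) as [k [hk Hk]].
    apply (rung_vertex x y E HR k); auto.
  - apply run_walk_chain.
    destruct first_run_long as [k [z [ru' [-> hk]]]].
    destruct (runs_at_head _ _ _ _ Hru) as [_ [_ Hz]].
    split; [| split]; simpl.
    + rewrite <- (Hz 0%nat) by lia. apply (x_adj_first_pivot x y E w Hx HR HP).
    + lia.
    + assert (Hzk : W (k - 1) = z) by (apply (Hz (k - 1)%nat); lia).
      rewrite <- Hzk.
      apply (walk_adjacent_from ru' k); [lia | apply (runs_at_next _ _ _ _ Hru) |].
      destruct ru' as [|[k2 z2] ru'']; auto. rewrite Hzk.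
      destruct Hru as [_ [_ [_ [Hcd _]]]]. exact Hcd.
Qed.

(* Every path from x to y meets every rung, hence pays for every mark: it has at least
   as many edges as the efficient walk. *)
Lemma efficient_walk_is_shortest q : farey_path x y q ->
  (path_length (x :: run_walk y (ladder_runs 0 ru)) <= path_length q)%nat.
Proof.
  intros Hq.
  assert (Hmeet : forall k, (k < M)%nat -> exists t, In t q /\ endpoint t (Ek k)).
  { intros k hk. destruct (rung_nth x y E HR k hk) as [Ha [Hb [Hab Hs]]].
    destruct (path_meets_rung x y q _ _ Hq Ha Hb Hab Hs) as [t [Ht Hend]].
    exists t. split; auto. }
  destruct (marks_from ru 0 Hru) as [ND _].
  destruct (runs_met_count y q _ ND (runs_met_from q Hmeet ru 0 Hru)) as [Wt [HW1 [HW2 [HW3 HW4]]]].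
  assert (HxW : ~ In x Wt).
  { intro h. destruct (marks_on_rungs x (HW3 x h)) as [k [hk Hk]].
    apply (x_not_on_rung x y E HR k hk Hk). }
  assert (HyW : ~ In y Wt).
  { intro h. destruct (marks_on_rungs y (HW3 y h)) as [k [hk Hk]].
    apply (y_not_on_rung x y E HR k hk Hk). }
  assert (ND2 : NoDup (x :: y :: Wt)).
  { constructor; [intros [h | h]; [apply (x_ne_y x y E HR); auto | auto] | constructor; auto]. }
  destruct Hq as [Hne [Hhd [Hlast _]]].
  assert (Inc : incl (x :: y :: Wt) q).
  { intros t [<- | [<- | ht]]; auto.
    - destruct q as [|u q']; [congruence |]. simpl in Hhd. left; auto.
    - rewrite <- Hlast. apply last_in; auto. }
  pose proof (NoDup_incl_length ND2 Inc) as Hlen. simpl in Hlen.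
  unfold path_length. simpl. lia.
Qed.

End FromStart.

End LadderRuns.

Lemma efficient_path_walk (E : list (V * V)) x y a v : length a = length v ->
  efficient_path x y a v = x :: run_walk y (ladder_runs E 0 (combine a v)).
Proof.
  intros Hlen. unfold efficient_path, run_walk.
  rewrite ladder_runs_len, ladder_runs_pivot, map_fst_combine, map_snd_combine; auto.
Qed.

Theorem mainTheorem5 (x y : V) (a : list nat) (v : list V) :
  farey_vertex x -> farey_vertex y ->
  ~ farey_dist_le x y 1 ->
  ladder_type x y a v ->
  farey_geodesic x y (efficient_path x y a v).
Proof.
  (* d(x,y) >= 2 is implicit: the ladder has at least one rung, which crosses xy. *)
  intros Hx Hy _ [E [w [HR [HP Hruns]]]].
  pose proof (runs_at_start w a v Hruns) as Hru.
  rewrite (efficient_path_walk E) by apply Hruns.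
  split.
  - apply (efficient_walk_is_path x y E w Hx Hy HR HP); auto.
  - apply (efficient_walk_is_shortest x y E w HR HP); auto.
Qed.
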